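(* Let $C=(C_{i,i'})_{1\le i,i'\le l}$ be a symmetric matrix. For all $m\in\mathbb Z_{\ge0}^l$, $$I_{C,m}(q,z)=\sum_{a\in\mathbb Z^l,\ 0\le a\le m}\frac{z^a q^{W_{C,a}}}{(q)_{m-a}}\,I_{C,a}(q,z),$$ where $0\le a\le m$ means $0\le a_i\le m_i$ for all $i$. Moreover, the solution of this recursion is unique once $I_{C,0}(q,z)=1$ is fixed.
   Context: Let $(q)_n=\prod_{k=1}^n(1-q^k)$ and, for $n\in\mathbb Z^l_{\ge0}$, $(q)_n=\prod_i(q)_{n_i}$; $z^a=\prod_i z_i^{a_i}$; $W_{C,a}=\frac12\big(\sum_{i,i'}C_{i,i'}a_ia_{i'}-\sum_iC_{i,i}a_i\big)$. Powers $q^{c}$ with $c$ a linear combination of entries of $C$ are treated as formal symbols with $q^aq^b=q^{a+b}$. For $m=(m_1,\dots,m_l)\in\mathbb Z^l_{\ge0}$ define the formal power series in $z=(z_1,\dots,z_l)$ $$I_{C,m}(q,z)=\sum_{\mathbf m}\prod_{i=1}^l z_i^{\sum_{t\ge0}t m_{i,t}}\frac{q^{Q_C(\mathbf m)}}{\prod_{i,t}(q)_{m_{i,t}}},$$ the sum over all tuples $\mathbf m=(m_{i,t})_{1\le i\le l,\ t\ge0}$ of nonnegative integers with $\sum_{t\ge0}m_{i,t}=m_i$ for each $i$, where $Q_C(\mathbf m)=\frac12\sum_{i,i'}\sum_{t,t'\ge0}C_{i,i'}\min(t,t')m_{i,t}m_{i',t'}-\frac12\sum_i\sum_{t\ge0}C_{i,i}\,t\,m_{i,t}$.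 *)

From HB Require Import structures.
From mathcomp Require Import all_boot all_order all_algebra.
Set Implicit Arguments. Unset Strict Implicit. Unset Printing Implicit Defensive.
Import Order.TTheory GRing.Theory Num.Theory.
Local Open Scope ring_scope.

Notation idx l := {ffun 'I_l -> nat}.

Definition idx0 (l : nat) : idx l := [ffun=> 0%N].

Section Defs.
(* G   : the Q-vector space of formal exponents of q.
   qpow: the formal power  c |-> q^c  (a morphism (G,+) -> (A,times), see the
         hypotheses of the theorem).
   e1  : the exponent "1", i.e. q = q^{e1}. *)
Variables (A : comUnitRingType) (G : lmodType rat) (qpow : G -> A) (e1 : G).
Variables (l : nat) (C : 'M[G]_l).

Definition qq : A := qpow e1.

Definition qfac (n : nat) : A := \prod_(1 <= k < n.+1) (1 - qq ^+ k).

Definition qfacv (n : idx l) : A := \prod_(i < l) qfac (n i).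

Definition Wexp (a : idx l) : G :=
  (1 / 2 : rat) *: (\sum_(i < l) \sum_(i' < l) C i i' *+ (a i * a i')
                    - \sum_(i < l) C i i *+ a i).

Definition Qexp (T M : nat) (mt : {ffun 'I_l -> {ffun 'I_T -> 'I_M}}) : G :=
  (1 / 2 : rat) *:
    (\sum_(i < l) \sum_(i' < l) \sum_(t < T) \sum_(t' < T)
        C i i' *+ (minn t t' * mt i t * mt i' t')
     - \sum_(i < l) \sum_(t < T) C i i *+ (t * mt i t)).

(* Coefficient of z^d in I_{C,m}(q,z), summing over the tuples
   (m_{i,t}) with t < T, m_{i,t} < M, sum_t m_{i,t} = m_i and
   sum_t t m_{i,t} = d_i.  For T = (sum_i d_i).+1 and M = (sum_i m_i).+1
   these are exactly all tuples (m_{i,t})_{i, t>=0} contributing to z^d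
   (necessarily m_{i,t} = 0 for t > d_i, and m_{i,t} <= m_i). *)
Definition Icoef_aux (T M : nat) (m d : idx l) : A :=
  \sum_(mt : {ffun 'I_l -> {ffun 'I_T -> 'I_M}} |
          [forall i, ((\sum_(t < T) (mt i t : nat))%N == m i)
                     && ((\sum_(t < T) t * mt i t)%N == d i)])
     qpow (Qexp mt) * (\prod_(i < l) \prod_(t < T) qfac (mt i t))^-1.

Definition Icoef (m d : idx l) : A :=
  Icoef_aux (\sum_(i < l) d i).+1 (\sum_(i < l) m i).+1 m d.

(* Coefficient of z^d in  sum_{0 <= a <= m} z^a q^{W_{C,a}} / (q)_{m-a} * J_a,
   where J : idx l -> (idx l -> A) is a family of formal power series in z,
   J a being given by its coefficient function (J a e = coeff of z^e). *)
Definition zrec (J : idx l -> idx l -> A) (m d : idx l) : A :=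
  \sum_(a : {ffun 'I_l -> 'I_(\sum_(i < l) m i).+1} | [forall i, (a i <= m i)%N])
    let a' : idx l := [ffun i => nat_of_ord (a i)] in
    if [forall i, (a' i <= d i)%N] then
      qpow (Wexp a') * (qfacv [ffun i => (m i - a' i)%N])^-1
        * J a' [ffun i => (d i - a' i)%N]
    else 0.

End Defs.

(* A tuple (m_{i,t}) contributing to the coefficient of z^d in I_{C,m} splits
   into its column t = 0 and the shifted tuple (m_{i,t+1}).  Writing a_i for
   the column sums of the shifted tuple, the head column is m - a, the shifted
   tuple has z-degree d - a, and since min(t+1, t'+1) = min(t, t') + 1 one gets
   Q_C = W_{C,a} + Q_C(shifted).  Summing over all tuples gives the recursion.
   As [Icoef_aux] truncates the tuples at depth T and entry size M, the
   recursion is first proved between consecutive depths; by induction it also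
   shows that the truncation is irrelevant once T > |d| and M > |m|.
   Uniqueness: every term of the recursion except a = 0 involves a
   coefficient of z-degree |d - a| < |d|, and the a = 0 term is I_{C,0} = 1. *)
From HB Require Import structures.
From mathcomp Require Import all_boot all_order all_algebra.
Set Implicit Arguments. Unset Strict Implicit. Unset Printing Implicit Defensive.
Import Order.TTheory GRing.Theory Num.Theory.
Local Open Scope ring_scope.

Lemma eqffunE (aT : finType) (rT : eqType) (f g : {ffun aT -> rT}) :
  (f == g) = [forall x, f x == g x].
Proof. by apply/eqP/eqfunP => [-> // | /ffunP]. Qed.

Lemma leq_summand (I : finType) (F : I -> nat) i : (F i <= \sum_j F j)%N.
Proof. by rewrite (bigD1 i) //= leq_addr. Qed.

Section ColumnCons.
Variables (l T : nat) (K : Type).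

Definition fcons (c : {ffun 'I_l -> K}) (y : {ffun 'I_l -> {ffun 'I_T -> K}}) :
    {ffun 'I_l -> {ffun 'I_T.+1 -> K}} :=
  [ffun i => [ffun t => if unlift ord0 t is Some s then y i s else c i]].

Definition fhead (x : {ffun 'I_l -> {ffun 'I_T.+1 -> K}}) : {ffun 'I_l -> K} :=
  [ffun i => x i ord0].

Definition fbehead (x : {ffun 'I_l -> {ffun 'I_T.+1 -> K}}) :
    {ffun 'I_l -> {ffun 'I_T -> K}} :=
  [ffun i => [ffun s => x i (lift ord0 s)]].

Lemma fcons0 c y i : fcons c y i ord0 = c i.
Proof. by rewrite !ffunE unlift_none. Qed.

Lemma fconsS c y i s : fcons c y i (lift ord0 s) = y i s.
Proof. by rewrite !ffunE liftK. Qed.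

Lemma fbehead_fcons c y : fbehead (fcons c y) = y.
Proof. by apply/ffunP => i; apply/ffunP => s; rewrite !ffunE liftK. Qed.

Lemma fcons_eta x : fcons (fhead x) (fbehead x) = x.
Proof.
apply/ffunP => i; apply/ffunP => t; rewrite !ffunE.
by case: unliftP => [s ->|->]; rewrite ?ffunE.
Qed.

End ColumnCons.

Lemma big_fcons_head (R : Type) (idx : R) (op : Monoid.com_law idx)
    (l T : nat) (K : finType) (P : pred {ffun 'I_l -> {ffun 'I_T.+1 -> K}})
    (g : {ffun 'I_l -> {ffun 'I_T -> K}} -> {ffun 'I_l -> K}) F :
  (forall x, P x -> fhead x = g (fbehead x)) ->
  \big[op/idx]_(x | P x) F x =
    \big[op/idx]_(y | P (fcons (g y) y)) F (fcons (g y) y).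
Proof.
move=> headP; rewrite (reindex_onto (fun y => fcons (g y) y) (@fbehead _ _ _)).
  by apply: eq_bigl => y; rewrite fbehead_fcons eqxx andbT.
by move=> x /headP <-; rewrite fcons_eta.
Qed.

Section ColumnStatistics.
Variables (l M : nat).
Local Notation tuples T := {ffun 'I_l -> {ffun 'I_T -> 'I_M}}.

Definition mass T (x : tuples T) : idx l := [ffun i => (\sum_(t < T) x i t)%N].

Definition moment T (x : tuples T) : idx l :=
  [ffun i => (\sum_(t < T) t * x i t)%N].

Definition minpair T (x : tuples T) (i i' : 'I_l) : nat :=
  \sum_(t < T) \sum_(t' < T) minn t t' * x i t * x i' t'.

Lemma massE T (x : tuples T) i : mass x i = (\sum_(t < T) x i t)%N.
Proof. by rewrite ffunE. Qed.

Lemma momentE T (x : tuples T) i : moment x i = (\sum_(t < T) t * x i t)%N.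
Proof. by rewrite ffunE. Qed.

Variable T : nat.
Implicit Types (c : {ffun 'I_l -> 'I_M}) (y : tuples T).

Lemma mass_fcons c y i : mass (fcons c y) i = (c i + mass y i)%N.
Proof.
by rewrite !massE big_ord_recl fcons0; under eq_bigr do rewrite fconsS.
Qed.

Lemma moment_fcons c y i : moment (fcons c y) i = (mass y i + moment y i)%N.
Proof.
rewrite !momentE massE big_ord_recl /= mul0n add0n -big_split /=.
by apply: eq_bigr => s _; rewrite fconsS mulSn.
Qed.

Lemma minpair_fcons c y i i' :
  minpair (fcons c y) i i' = (mass y i * mass y i' + minpair y i i')%N.
Proof.
rewrite /minpair big_ord_recl big1 ?add0n => [|t' _]; last by rewrite min0n.
rewrite !massE big_distrl -big_split /=; apply: eq_bigr => s _.
rewrite big_ord_recl minn0 !mul0n add0n big_distrr -big_split /=.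
by apply: eq_bigr => s' _; rewrite !fconsS /bump !add1n minnSS !mulSn mulnDl.
Qed.

End ColumnStatistics.

Definition subidx l (d a : idx l) : idx l := [ffun i => (d i - a i)%N].

Lemma sum_subidx_lt l (d a : idx l) : (forall i, a i <= d i)%N -> a != idx0 l ->
  (\sum_(i < l) subidx d a i < \sum_(i < l) d i)%N.
Proof.
move=> le_ad; rewrite eqffunE => /forallPn[i]; rewrite ffunE -lt0n => a_gt0.
rewrite [X in (_ < X)%N](eq_bigr (fun i => subidx d a i + a i)%N) => [|j _]; last first.
  by rewrite ffunE subnK.
by rewrite big_split /= -{1}[X in (X < _)%N]addn0 ltn_add2l (bigD1 i) //= ltn_addr.
Qed.

Section QSeries.
Variables (A : comUnitRingType) (G : lmodType rat) (qpow : G -> A) (e1 : G).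
Variables (l : nat) (C : 'M[G]_l).
Hypotheses (qpow0 : qpow 0 = 1)
  (qpowD : forall x y : G, qpow (x + y) = qpow x * qpow y)
  (qfac_unit : forall n : nat, qfac qpow e1 n \is a GRing.unit).
Local Notation tuples T M := {ffun 'I_l -> {ffun 'I_T -> 'I_M}}.
Local Notation zrec := (zrec qpow e1 C).
Local Notation Icoef_aux := (Icoef_aux qpow e1 C).
Implicit Types (J : idx l -> idx l -> A) (m d : idx l).

Lemma eq_zrec J J' m d :
  (forall a : idx l, (forall i, a i <= m i)%N -> (forall i, a i <= d i)%N ->
     J a (subidx d a) = J' a (subidx d a)) ->
  zrec J m d = zrec J' m d.
Proof.
move=> eqJ; apply: eq_bigr => a /forallP le_am /=.
case: ifP => // /forallP le_ad; congr (_ * _); apply: eqJ => i; last exact: le_ad.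
by rewrite ffunE.
Qed.

Lemma zrec_fixpoint_unique J J' :
  (forall d, J (idx0 l) d = J' (idx0 l) d) ->
  (forall m d, J m d = zrec J m d) -> (forall m d, J' m d = zrec J' m d) ->
  forall m d, J m d = J' m d.
Proof.
move=> eq0 fixJ fixJ' m d; move: {2}(\sum_(i < l) d i).+1 (ltnSn (\sum_(i < l) d i)).
move=> n; elim: n m d => // n IHn m d; rewrite ltnS => le_dn.
rewrite fixJ fixJ'; apply: eq_zrec => a le_am le_ad.
have [-> | a_ne0] := eqVneq a (idx0 l); first exact: eq0.
exact/IHn/(leq_trans (sum_subidx_lt le_ad a_ne0)).
Qed.

Lemma Wexp_idx0 : Wexp C (idx0 l) = 0.
Proof.
rewrite /Wexp !big1 ?subr0 ?scaler0 // => i _; rewrite ?ffunE ?mulr0n //.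
by rewrite big1 // => i' _; rewrite !ffunE mulr0n.
Qed.

Lemma qfacv_idx0 : qfacv qpow e1 (idx0 l) = 1.
Proof. by rewrite /qfacv big1 // => i _; rewrite ffunE /qfac big_geq. Qed.

Lemma zrec_idx0 J d : zrec J (idx0 l) d = J (idx0 l) d.
Proof.
pose a0 : {ffun 'I_l -> 'I_(\sum_(i < l) idx0 l i).+1} := [ffun=> ord0].
have a0E : [ffun i => nat_of_ord (a0 i)] = idx0 l by apply/ffunP => i; rewrite !ffunE.
rewrite /zrec (big_pred1 a0) => [/=|a]; last first.
  by rewrite /= eqffunE; apply: eq_forallb => i; rewrite !ffunE leqn0 -val_eqE.
rewrite a0E; have -> : [forall i, idx0 l i <= d i]%N.
  by apply/forallP => i; rewrite ffunE.
have -> : [ffun i => (idx0 l i - idx0 l i)%N] = idx0 l.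
  by apply/ffunP => i; rewrite !ffunE.
have -> : [ffun i => (d i - idx0 l i)%N] = d by apply/ffunP => i; rewrite !ffunE subn0.
by rewrite Wexp_idx0 qpow0 qfacv_idx0 invr1 !mul1r.
Qed.

Lemma QexpE T M (x : tuples T M) :
  Qexp C x = (1 / 2 : rat) *: (\sum_(i < l) \sum_(i' < l) C i i' *+ minpair x i i'
                              - \sum_(i < l) C i i *+ moment x i).
Proof.
congr (_ *: (_ - _)); apply: eq_bigr => i _; last by rewrite momentE sumrMnr.
apply: eq_bigr => i' _; rewrite /minpair -sumrMnr.
by apply: eq_bigr => t _; rewrite sumrMnr.
Qed.

Lemma Qexp_fcons T M c (y : tuples T M) :
  Qexp C (fcons c y) = Wexp C (mass y) + Qexp C y.
Proof.
rewrite !QexpE /Wexp -scalerDr; congr (_ *: _).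
under eq_bigr => i _.
  rewrite (eq_bigr (fun i' =>
             C i i' *+ (mass y i * mass y i') + C i i' *+ minpair y i i'));
    last by move=> i' _; rewrite minpair_fcons mulrnDr.
  rewrite big_split /=.
  over.
under [in X in _ - X]eq_bigr do rewrite moment_fcons mulrnDr.
by rewrite !big_split /= opprD addrACA.
Qed.

Definition weight T M (x : tuples T M) : A :=
  qpow (Qexp C x) * (\prod_(i < l) \prod_(t < T) qfac qpow e1 (x i t))^-1.

Lemma weight_fcons T M c (y : tuples T M) :
  weight (fcons c y) =
    qpow (Wexp C (mass y)) * (qfacv qpow e1 [ffun i => (c i : nat)])^-1 * weight y.
Proof.
rewrite /weight; have -> : \prod_(i < l) \prod_(t < T.+1) qfac qpow e1 (fcons c y i t) =
    qfacv qpow e1 [ffun i => (c i : nat)]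
      * \prod_(i < l) \prod_(t < T) qfac qpow e1 (y i t).
  rewrite /qfacv -big_split; apply: eq_bigr => i _.
  rewrite big_ord_recl fcons0; under eq_bigr do rewrite fconsS.
  by rewrite ffunE.
rewrite Qexp_fcons qpowD invrM ?unitr_prod // => [|i _]; last exact: unitr_prod.
by rewrite [X in _ * X]mulrC mulrACA.
Qed.

Lemma Icoef_auxE T M m d :
  Icoef_aux T M m d = \sum_(x : tuples T M | (mass x == m) && (moment x == d)) weight x.
Proof.
apply: eq_bigl => x; apply/forallP/andP => [md_x|[/eqP <- /eqP <-] i].
  by split; apply/eqP/ffunP => i; have /andP[/eqP ? /eqP ?] := md_x i; rewrite ffunE.
by rewrite massE momentE !eqxx.
Qed.

Lemma Icoef_aux_behead T M m d : (forall i, m i <= M)%N ->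
  Icoef_aux T.+1 M.+1 m d =
    \sum_(y : tuples T M.+1 | [forall i, mass y i <= m i]%N
                              && [forall i, mass y i + moment y i == d i]%N)
      qpow (Wexp C (mass y)) * (qfacv qpow e1 (subidx m (mass y)))^-1 * weight y.
Proof.
move=> le_mM.
pose g (y : tuples T M.+1) : {ffun 'I_l -> 'I_M.+1} :=
  [ffun i => inord (m i - mass y i)].
have gE y i : g y i = (m i - mass y i)%N :> nat.
  by rewrite ffunE inordK // ltnS (leq_trans (leq_subr _ _)).
rewrite Icoef_auxE (big_fcons_head _ (g := g)) => [|x /andP[/eqP m_x _]].
  apply: eq_big => y.
    rewrite !eqffunE; congr andb; apply: eq_forallb => i.
      rewrite mass_fcons gE; apply/eqP/idP => [<-|/subnK //]; exact: leq_addl.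
    by rewrite moment_fcons.
  move=> _; rewrite weight_fcons (_ : [ffun i => (g y i : nat)] = subidx m (mass y)) //.
  by apply/ffunP => i; rewrite [RHS]ffunE ffunE gE.
apply/ffunP => i; apply/val_inj; rewrite /= gE.
have := mass_fcons (fhead x) (fbehead x) i.
by rewrite fcons_eta m_x => ->; rewrite addnK.
Qed.

Lemma Icoef_aux_rec T M m d : (forall i, m i <= M)%N ->
  Icoef_aux T.+1 M.+1 m d = zrec (Icoef_aux T M.+1) m d.
Proof.
move=> le_mM; rewrite Icoef_aux_behead //.
(* [p y] is the column-sum vector of [y], as an index of the sum in [zrec];
   [inord] is faithful on the tails with [mass y <= m]. *)
pose p (y : tuples T M.+1) : {ffun 'I_l -> 'I_(\sum_(i < l) m i).+1} :=
  [ffun i => inord (mass y i)].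
have pE y : (forall i, mass y i <= m i)%N -> forall i, p y i = mass y i :> nat.
  move=> le_ym i; rewrite ffunE inordK // ltnS.
  exact: leq_trans (le_ym i) (leq_summand m i).
have eq_pE y a : (forall i, mass y i <= m i)%N ->
    (p y == a) = (mass y == [ffun i => (a i : nat)]).
  move=> le_ym; rewrite !eqffunE; apply: eq_forallb => i.
  by rewrite -val_eqE /= pE // !ffunE.
rewrite (partition_big p (fun a => [forall i, a i <= m i]%N))
    => [|y /andP[/forallP le_ym _]]; last by apply/forallP => i; rewrite pE.
apply: eq_bigr => a /forallP le_am /=; set a' := [ffun i => (a i : nat)].
have a'E i : a' i = a i by rewrite ffunE.
case: ifP => [/forallP le_ad | /forallP nle_ad].
  rewrite Icoef_auxE mulr_sumr; apply: eq_big => y; last first.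
    by move=> /andP[/andP[/forallP le_ym _]]; rewrite eq_pE // => /eqP ->.
  apply/idP/idP => [/andP[/andP[/forallP le_ym /forallP md_y]]|/andP[/eqP ya /eqP yd]].
    rewrite eq_pE // => /eqP ya; rewrite ya eqxx /=; apply/eqP/ffunP => i.
    by rewrite [RHS]ffunE -(eqP (md_y i)) ya a'E ffunE addKn.
  rewrite eq_pE ya ?eqxx ?andbT; last by move=> i; rewrite a'E.
  apply/andP; split; apply/forallP => i; first by rewrite a'E.
  by rewrite yd !ffunE subnKC // -a'E.
rewrite big_pred0 // => y; apply/negP => /andP[/andP[/forallP le_ym /forallP md_y]].
rewrite eq_pE // => /eqP ya; apply: nle_ad => i.
by have /eqP <- := md_y i; rewrite ya leq_addr.
Qed.

Lemma Icoef_aux_depth0 M m d :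
  Icoef_aux 0 M.+1 m d = ((m == idx0 l) && (d == idx0 l))%:R.
Proof.
have stat0 (x : tuples 0 M.+1) : mass x = idx0 l /\ moment x = idx0 l.
  by split; apply/ffunP => i; rewrite !ffunE big_ord0.
have weight1 (x : tuples 0 M.+1) : weight x = 1.
  rewrite /weight QexpE !big1 ?subr0 ?scaler0 ?qpow0 ?invr1 ?mulr1 // => i _.
  - by rewrite big_ord0.
  - by have [_ ->] := stat0 x; rewrite ffunE mulr0n.
  by rewrite big1 // => i' _; rewrite /minpair big_ord0 mulr0n.
rewrite Icoef_auxE; under eq_bigl => x do have [-> ->] := stat0 x.
under eq_bigr do rewrite weight1.
rewrite sumr_const [idx0 l == m]eq_sym [idx0 l == d]eq_sym.
case: (_ && _); last by rewrite card0.
by rewrite card_ffun card_ffun !card_ord expn0 exp1n.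
Qed.

Lemma Icoef_aux_idx0 T M d : Icoef_aux T M.+1 (idx0 l) d = (d == idx0 l)%:R.
Proof.
elim: T => [|T IHT]; first by rewrite Icoef_aux_depth0 eqxx.
by rewrite Icoef_aux_rec // => [|i]; rewrite ?zrec_idx0 // ffunE.
Qed.

Lemma Icoef_aux_stable T T' M M' m d :
  (\sum_(i < l) d i < T)%N -> (\sum_(i < l) d i < T')%N ->
  (\sum_(i < l) m i < M)%N -> (\sum_(i < l) m i < M')%N ->
  Icoef_aux T M m d = Icoef_aux T' M' m d.
Proof.
elim: T T' M M' m d => [|T IHT] [|T'] [|M] [|M'] m d //.
move=> le_dT le_dT' le_mM le_mM'.
have le_m (N : nat) : (\sum_(i < l) m i < N.+1)%N -> forall i, (m i <= N)%N.
  by move=> le_mN i; exact: leq_trans (leq_summand m i) le_mN.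
rewrite (Icoef_aux_rec T d (le_m _ le_mM)) (Icoef_aux_rec T' d (le_m _ le_mM')).
apply: eq_zrec => a le_am le_ad.
have [-> | a_ne0] := eqVneq a (idx0 l); first by rewrite !Icoef_aux_idx0.
have lt_da := sum_subidx_lt le_ad a_ne0.
have le_a_m : (\sum_(i < l) a i <= \sum_(i < l) m i)%N by exact: leq_sum.
apply: IHT; [exact: leq_trans lt_da le_dT | exact: leq_trans lt_da le_dT' |
             exact: leq_ltn_trans le_a_m le_mM | exact: leq_ltn_trans le_a_m le_mM'].
Qed.

Lemma Icoef_rec m d : Icoef qpow e1 C m d = zrec (Icoef qpow e1 C) m d.
Proof.
(* depth |d| + 2, so that the depth |d| + 1 left for the tail exceeds |d - a|
   also for a = 0 *)
rewrite /Icoef (Icoef_aux_stable (T' := (\sum_(i < l) d i).+2)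
                                 (M' := (\sum_(i < l) m i).+1)) //.
rewrite Icoef_aux_rec => [|i]; last exact: leq_summand.
apply: eq_zrec => a le_am le_ad; apply: Icoef_aux_stable; rewrite // ltnS.
  by apply: leq_sum => i _; rewrite ffunE leq_subr.
exact: leq_sum.
Qed.

End QSeries.

Theorem proposition2p4 (A : comUnitRingType) (G : lmodType rat)
    (qpow : G -> A) (e1 : G) (l : nat) (C : 'M[G]_l)
    (qpow0 : qpow 0 = 1)
    (qpowD : forall x y : G, qpow (x + y) = qpow x * qpow y)
    (qfac_unit : forall n : nat, qfac qpow e1 n \is a GRing.unit)
    (Csym : C^T = C) :
  (forall m d : idx l,
      Icoef qpow e1 C m d = zrec qpow e1 C (Icoef qpow e1 C) m d) /\
  (forall J : idx l -> idx l -> A,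
      (forall d : idx l, J (idx0 l) d = (d == idx0 l)%:R) ->
      (forall m d : idx l, J m d = zrec qpow e1 C J m d) ->
      forall m d : idx l, J m d = Icoef qpow e1 C m d).
Proof.
have Icoef_fix := Icoef_rec C qpow0 qpowD qfac_unit.
split=> // J J0 J_fix; apply: zrec_fixpoint_unique => // d.
by rewrite J0 /Icoef Icoef_aux_idx0.
Qed.
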